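(* Let $R$ be a discrete valuation ring with field of fractions $K$ and uniformizer $\pi$, $V$ a finite-dimensional $K$-vector space, and $B$ a nondegenerate $K$-bilinear form on $V$ with $B(x,y)=\epsilon B(y,x)$ for all $x,y$, where $\epsilon=\pm1$. Let $L$ be a lattice of $V$ and $L'$ its dual lattice. Then $m_-(L,L')$ is an almost self-dual lattice, and its dual lattice is $m_+(L,L')$.
   Context: A lattice of $V$ is a free $R$-submodule $L$ with $K\otimes_R L\to V$ an isomorphism. The dual of a lattice $L$ is $L'=\{x\in V: B(x,y)\in R\ \forall y\in L\}$. A lattice $L$ is almost self-dual if $\pi L'\subset L\subset L'$. $m_-(L,M)=\sum_{n\in\mathbb Z}(\pi^nL\cap\pi^{-n}M)$ (submodule generated) and $m_+(L,M)=\bigcap_{n\in\mathbb Z}(\pi^nL+\pi^{-n}M)$. *)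

From HB Require Import structures.
From mathcomp Require Import all_boot all_order all_algebra.
Set Implicit Arguments. Unset Strict Implicit. Unset Printing Implicit Defensive.
Import Order.TTheory GRing.Theory Num.Theory.
Local Open Scope ring_scope.

Section Defs.
Variables (K : fieldType) (V : vectType K).

Definition is_dvr_with_uniformizer (R : K -> Prop) (pi : K) : Prop :=
  [/\ R 1, (forall x y, R x -> R y -> R (x - y)),
      (forall x y, R x -> R y -> R (x * y)),
      (R pi /\ ~ R (pi^-1))
    & forall x, x != 0 -> exists (n : int) (u : K), [/\ R u, R u^-1 & x = u * pi ^ n]].

Definition bilinear_form (B : V -> V -> K) : Prop :=
  (forall a x y z, B (a *: x + y) z = a * B x z + B y z) /\
  (forall a x y z, B z (a *: x + y) = a * B z x + B z y).

Definition nondegenerate_form (B : V -> V -> K) : Prop :=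
  (forall x, (forall y, B x y = 0) -> x = 0) /\
  (forall y, (forall x, B x y = 0) -> y = 0).

(* A lattice: a free R-submodule L of V such that K (x)_R L -> V is an
   isomorphism, i.e. L is the R-span of some K-basis of V, the basis being an
   R-basis of L. *)
Definition lattice (R : K -> Prop) (L : V -> Prop) : Prop :=
  exists b : (\dim {: V}).-tuple V, basis_of fullv b /\
    forall x, L x <-> exists c : 'I_(\dim {: V}) -> K,
      (forall i, R (c i)) /\ x = \sum_i c i *: tnth b i.

Definition dual (R : K -> Prop) (B : V -> V -> K) (L : V -> Prop) : V -> Prop :=
  fun x => forall y, L y -> R (B x y).

Definition scale_set (a : K) (L : V -> Prop) : V -> Prop :=
  fun x => exists y, L y /\ x = a *: y.

Definition subset_of (L M : V -> Prop) : Prop := forall x, L x -> M x.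

Definition almost_self_dual (R : K -> Prop) (pi : K) (B : V -> V -> K)
  (L : V -> Prop) : Prop :=
  lattice R L /\ subset_of (scale_set pi (dual R B L)) L /\ subset_of L (dual R B L).

Definition R_span (R : K -> Prop) (S : V -> Prop) : V -> Prop :=
  fun x => exists (k : nat) (r : 'I_k -> K) (y : 'I_k -> V),
    (forall i, R (r i) /\ S (y i)) /\ x = \sum_(i < k) r i *: y i.

Definition m_minus (R : K -> Prop) (pi : K) (L M : V -> Prop) : V -> Prop :=
  R_span R (fun x => exists n : int,
    scale_set (pi ^ n) L x /\ scale_set (pi ^ (- n)) M x).

Definition m_plus (pi : K) (L M : V -> Prop) : V -> Prop :=
  fun x => forall n : int, exists y z,
    [/\ scale_set (pi ^ n) L y, scale_set (pi ^ (- n)) M z & x = y + z].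

End Defs.

(* By the elementary divisor theorem over R (Smith normal form of the Gram
   matrix of an R-basis of L, which is invertible by nondegeneracy), L has two
   R-bases (e_i) and (f_i) with B(e_i, f_j) = [i = j] pi^(m_i).  Then L' is
   spanned by the pi^(-m_i) e_i and, since eps-symmetry makes left and right
   duals agree, also by the pi^(-m_i) f_i.  All lattices in sight are then
   diagonal in both bases, and comparing exponents coordinatewise gives
   m_-(L, L') = <pi^(-g_i) e_i> = <pi^(-g_i) f_i> and m_+(L, L') = <pi^(-h_i) e_i>
   with g_i = floor(m_i / 2) and h_i = m_i - g_i.  Pairing against the f-basis,
   the dual of m_-(L, L') is <pi^(-(m_i - g_i)) e_i> = m_+(L, L'), and
   g_i <= h_i <= g_i + 1 is exactly almost self-duality. *)

From HB Require Import structures.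
From mathcomp Require Import all_boot all_order all_algebra perm.
From mathcomp Require Import zify.
Set Implicit Arguments. Unset Strict Implicit. Unset Printing Implicit Defensive.
Import Order.TTheory GRing.Theory Num.Theory passmx.
Local Open Scope ring_scope.

Section DiscreteValuationRing.
Variables (K : fieldType) (R : K -> Prop) (pi : K).
Hypothesis dvr : is_dvr_with_uniformizer R pi.

Lemma dvr1 : R 1. Proof. by case: dvr. Qed.

Lemma dvrB x y : R x -> R y -> R (x - y).
Proof. by case: dvr => _ + _ _ _; apply. Qed.

Lemma dvrM x y : R x -> R y -> R (x * y).
Proof. by case: dvr => _ _ + _ _; apply. Qed.

Lemma dvr0 : R 0. Proof. by rewrite -(subrr 1); apply: dvrB; apply: dvr1. Qed.

Lemma dvrN x : R x -> R (- x).
Proof. by move=> Rx; rewrite -sub0r; apply: dvrB => //; apply: dvr0. Qed.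

Lemma dvrD x y : R x -> R y -> R (x + y).
Proof. by move=> Rx Ry; rewrite -[y]opprK; apply: dvrB => //; apply: dvrN. Qed.

Lemma dvr_sum (I : Type) (r : seq I) (P : pred I) (F : I -> K) :
  (forall i, P i -> R (F i)) -> R (\sum_(i <- r | P i) F i).
Proof. by move=> RF; apply: big_ind => //; [apply: dvr0 | apply: dvrD]. Qed.

Lemma dvr_nat_mul (b : bool) x : R x -> R (x *+ b).
Proof. by case: b => // _; apply: dvr0. Qed.

Lemma dvr_pi : R pi. Proof. by case: dvr => _ _ _ []. Qed.

Lemma dvr_pi_neq0 : pi != 0.
Proof.
apply/eqP => pi0; case: dvr => _ _ _ [_ + _]; apply.
by rewrite pi0 invr0; apply: dvr0.
Qed.

Lemma dvr_expz (k : int) : 0 <= k -> R (pi ^ k).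
Proof.
case: k => // k _; rewrite -exprnP; elim: k => [|k IHk]; first exact: dvr1.
by rewrite exprS; apply: dvrM => //; apply: dvr_pi.
Qed.

Lemma expzD_pi (a b : int) : pi ^ (a + b) = pi ^ a * pi ^ b.
Proof. by rewrite expfzDr // dvr_pi_neq0. Qed.

Lemma expz_pi_subK (a b : int) : pi ^ (a - b) * pi ^ b = pi ^ a.
Proof. by rewrite -expzD_pi subrK. Qed.

Lemma dvr_expz_le (a b : int) x : a <= b -> R (pi ^ a * x) -> R (pi ^ b * x).
Proof.
move=> le_ab Rax; rewrite -(expz_pi_subK b a) -mulrA.
by apply: dvrM => //; apply: dvr_expz; rewrite subr_ge0.
Qed.

Lemma dvr_div_total x y : x != 0 -> y != 0 -> R (x / y) \/ R (y / x).
Proof.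
have [_ _ _ _ factor] := dvr.
move=> /factor [a [u [Ru Rui ->]]] /factor [b [v [Rv Rvi ->]]].
have R_ratio (c d : int) (w z : K) : d <= c -> R w -> R z^-1 ->
    R (w * pi ^ c / (z * pi ^ d)).
  move=> le_dc Rw Rzi; rewrite invfM mulrACA invr_expz -expzD_pi.
  by apply: dvrM; [apply: dvrM | apply: dvr_expz; rewrite subr_ge0].
have [le_ba | /ltW le_ab] := lerP b a; [left | right]; exact: R_ratio.
Qed.

Lemma dvr_pivot (I : finType) (f : I -> K) :
  (forall i, f i = 0) \/ exists2 i, f i != 0 & forall j, R (f j / f i).
Proof.
suff [f0 | [i fi0 Rf]] : (forall i, i \in enum I -> f i = 0) \/
    exists2 i, f i != 0 & forall j, j \in enum I -> R (f j / f i).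
- by left => i; apply: f0; rewrite mem_enum.
- by right; exists i => // j; apply: Rf; rewrite mem_enum.
elim: (enum I) => [|a s [f0 | [i fi0 Rf]]]; first by left.
- have [fa0 | fa0] := eqVneq (f a) 0.
    by left => i; rewrite inE => /predU1P [-> | /f0].
  right; exists a => // j; rewrite inE => /predU1P [-> | /f0 ->].
    by rewrite divff //; apply: dvr1.
  by rewrite mul0r; apply: dvr0.
- have [fa0 | fa0] := eqVneq (f a) 0.
    right; exists i => // j; rewrite inE => /predU1P [-> | /Rf //].
    by rewrite fa0 mul0r; apply: dvr0.
  have [Rai | Ria] := dvr_div_total fa0 fi0.
    by right; exists i => // j; rewrite inE => /predU1P [-> | /Rf].
  right; exists a => // j; rewrite inE => /predU1P [-> | /Rf Rji].
    by rewrite divff //; apply: dvr1.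
  by rewrite -(divfK fi0 (f j)) -[_ / f a]mulrA; apply: dvrM.
Qed.

(** * Smith normal form over R *)

Definition Rmx m n (A : 'M[K]_(m, n)) := forall i j, R (A i j).

Definition unimodular n (A A' : 'M[K]_n) := [/\ Rmx A, Rmx A' & A *m A' = 1%:M].

Definition smith_form n (T : 'M[K]_n) :=
  exists (P P' S S' : 'M[K]_n) (d : 'rV[K]_n),
    [/\ unimodular P P', unimodular S S' & T = P *m diag_mx d *m S].

Lemma Rmx_mul m n p (A : 'M[K]_(m, n)) (C : 'M[K]_(n, p)) :
  Rmx A -> Rmx C -> Rmx (A *m C).
Proof. by move=> RA RC i j; rewrite mxE; apply: dvr_sum => // k _; apply: dvrM. Qed.

Lemma Rmx_tr m n (A : 'M[K]_(m, n)) : Rmx A -> Rmx A^T.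
Proof. by move=> RA i j; rewrite mxE. Qed.

Lemma Rmx_opp m n (A : 'M[K]_(m, n)) : Rmx A -> Rmx (- A).
Proof. by move=> RA i j; rewrite mxE; apply: dvrN. Qed.

Lemma Rmx0 m n : Rmx (0 : 'M[K]_(m, n)).
Proof. by move=> i j; rewrite mxE; apply: dvr0. Qed.

Lemma Rmx1 n : Rmx (1%:M : 'M[K]_n).
Proof. by move=> i j; rewrite mxE; apply/dvr_nat_mul/dvr1. Qed.

Lemma Rmx_diag n (d : 'rV[K]_n) : (forall i, R (d 0 i)) -> Rmx (diag_mx d).
Proof. by move=> Rd i j; rewrite mxE; apply: dvr_nat_mul. Qed.

Lemma Rmx_block m1 m2 n1 n2 (A : 'M[K]_(m1, n1)) (C : 'M[K]_(m1, n2))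
  (D : 'M[K]_(m2, n1)) (E : 'M[K]_(m2, n2)) :
  Rmx A -> Rmx C -> Rmx D -> Rmx E -> Rmx (block_mx A C D E).
Proof.
move=> RA RC RD RE i j; rewrite -(splitK i) -(splitK j).
by case: (split i) => a; case: (split j) => b;
  rewrite ?block_mxEul ?block_mxEur ?block_mxEdl ?block_mxEdr.
Qed.

Lemma unimodular1 n : unimodular (1%:M : 'M[K]_n) 1%:M.
Proof. by split; [apply: Rmx1 | apply: Rmx1 | rewrite mulmx1]. Qed.

Lemma unimodular_mul n (A A' C C' : 'M[K]_n) :
  unimodular A A' -> unimodular C C' -> unimodular (A *m C) (C' *m A').
Proof.
move=> [RA RA' AA'] [RC RC' CC']; split; try exact: Rmx_mul.
by rewrite mulmxA -(mulmxA A) CC' mulmx1.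
Qed.

Lemma unimodular_tperm n (a b : 'I_n) : unimodular (tperm_mx a b) (tperm_mx a b).
Proof.
have Rtperm : Rmx (tperm_mx a b) by move=> i j; rewrite !mxE; apply/dvr_nat_mul/dvr1.
by split=> //; rewrite -perm_mxM tperm2 perm_mx1.
Qed.

Lemma unimodular_diag n (u : 'rV[K]_n) :
  (forall i, [/\ u 0 i != 0, R (u 0 i) & R (u 0 i)^-1]) ->
  unimodular (diag_mx u) (diag_mx (\row_i (u 0 i)^-1)).
Proof.
move=> Ru; split; try by apply: Rmx_diag => i; rewrite ?mxE; case: (Ru i).
rewrite mulmx_diag -diag_const_mx; congr diag_mx; apply/rowP => i.
by rewrite !mxE divff //; case: (Ru i).
Qed.

(* [T 0 0] divides every entry of [T], so R-integral row and column operations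
   clear the first row and column; the Schur complement is treated by induction. *)
Lemma smith_pivot n (T : 'M[K]_(1 + n)) :
  (forall A : 'M[K]_n, smith_form A) ->
  T 0 0 != 0 -> (forall k l, R (T k l / T 0 0)) -> smith_form T.
Proof.
move=> IH t0 RT; set t := T 0 0 in t0 RT.
set r := ursubmx T; set c := dlsubmx T.
have ul_t : ulsubmx T = t%:M by rewrite [ulsubmx T]mx11_scalar !mxE lshift0.
have Rc : Rmx (t^-1 *: c) by move=> i j; rewrite !mxE mulrC; apply: RT.
have Rr : Rmx (t^-1 *: r) by move=> i j; rewrite !mxE mulrC; apply: RT.
have [P [P' [S [S' [d [[RP RP' PP'] [RS RS' SS'] defA]]]]]] :=
  IH (drsubmx T - t^-1 *: (c *m r)).
exists (block_mx 1%:M 0 (t^-1 *: c) P), (block_mx 1%:M 0 (- (P' *m (t^-1 *: c))) P').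
exists (block_mx 1%:M (t^-1 *: r) 0 S), (block_mx 1%:M (- ((t^-1 *: r) *m S')) 0 S').
exists (row_mx t%:M d); split; [split | split | ].
- by apply: Rmx_block => //; [apply: Rmx1 | apply: Rmx0].
- by apply: Rmx_block => //; [apply: Rmx1 | apply: Rmx0 | apply/Rmx_opp/Rmx_mul].
- rewrite mulmx_block !mulmx0 !mul0mx !mulmx1 !addr0 PP' mulmxN mulmxA PP' mul1mx.
  by rewrite subrr add0r -scalar_mx_block.
- by apply: Rmx_block => //; [apply: Rmx1 | apply: Rmx0].
- by apply: Rmx_block => //; [apply: Rmx1 | apply/Rmx_opp/Rmx_mul | apply: Rmx0].
- rewrite mulmx_block !mulmx0 !mul0mx !mulmx1 !add0r !addr0 SS' mul1mx.
  by rewrite addNr -scalar_mx_block.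
have -> : diag_mx (row_mx t%:M d) = block_mx t%:M 0 0 (diag_mx d).
  by rewrite diag_mx_row; congr block_mx; apply/matrixP => i j; rewrite !ord1 !mxE.
rewrite !mulmx_block !mulmx0 !mul0mx !mulmx1 !mul1mx !addr0 !add0r !mul0mx addr0.
rewrite mul_scalar_mx mul_mx_scalar !scalerA !mulfV // !scale1r.
by rewrite -defA scalemxAr addrC subrK -ul_t submxK.
Qed.

Lemma smith_normal_form n (T : 'M[K]_n) : smith_form T.
Proof.
elim: n T => [|n IH] T.
  exists 1%:M, 1%:M, 1%:M, 1%:M, 0; split; try apply: unimodular1.
  by apply/matrixP => [[]].
have [T0 | [[i0 j0] /= t0 RT]] := dvr_pivot (fun p : 'I_n.+1 * 'I_n.+1 => T p.1 p.2).
  exists 1%:M, 1%:M, 1%:M, 1%:M, 0; split; try apply: unimodular1.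
  by rewrite linear0 mulmx0 mul0mx; apply/matrixP => i j; rewrite !mxE (T0 (i, j)).
pose T1 := xrow i0 0 (xcol j0 0 T).
have T1E k l : T1 k l = T (tperm i0 0 k) (tperm j0 0 l) by rewrite !mxE.
have [P [P' [S [S' [d [uP uS defT1]]]]]] : smith_form T1.
  apply: (smith_pivot IH) => [|k l]; rewrite !T1E tpermR ?tpermR //.
  exact: (RT (_, _)).
exists (tperm_mx i0 0 *m P), (P' *m tperm_mx i0 0).
exists (S *m tperm_mx j0 0), (tperm_mx j0 0 *m S'), d.
split; try by apply: unimodular_mul => //; apply: unimodular_tperm.
have [_ _ tt_i0] := unimodular_tperm i0 0; have [_ _ tt_j0] := unimodular_tperm j0 0.
rewrite !mulmxA -(mulmxA _ P) -(mulmxA _ (P *m _)) -defT1 /T1 xrowE xcolE.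
by rewrite !mulmxA tt_i0 mul1mx -mulmxA tt_j0 mulmx1.
Qed.

Lemma smith_normal_form_unitmx n (T : 'M[K]_n) : T \in unitmx ->
  exists (P P' S S' : 'M[K]_n) (m : 'I_n -> int),
    [/\ unimodular P P', unimodular S S' & T = P *m diag_mx (\row_i pi ^ m i) *m S].
Proof.
have [P [P' [S [S' [d [uP uS ->]]]]]] := smith_normal_form T.
rewrite !unitmxE !det_mulmx det_diag !unitfE !mulf_eq0 prodf_seq_eq0 !negb_or.
case/andP=> /andP[_ /hasPn d_neq0] _.
have [_ _ _ _ factor] := dvr.
have /fin_all_exists [mu defd] i :
    exists p : int * K, [/\ R p.2, R p.2^-1 & d 0 i = p.2 * pi ^ p.1].
  have [|k [u [Ru Rui ->]]] := factor (d 0 i); last by exists (k, u).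
  by apply: d_neq0; rewrite mem_index_enum.
pose u := \row_i (mu i).2; pose m i := (mu i).1.
have uu : unimodular (diag_mx u) (diag_mx (\row_i (u 0 i)^-1)).
  apply: unimodular_diag => i; rewrite mxE; have [Ru Rui di] := defd i.
  split=> //; apply: contra_neq (d_neq0 i (mem_index_enum i)) => u0.
  by rewrite di u0 mul0r.
exists P, P', (diag_mx u *m S), (S' *m diag_mx (\row_i (u 0 i)^-1)), m.
split=> //; first exact: unimodular_mul.
rewrite mulmxA -[P *m _ *m diag_mx u]mulmxA mulmx_diag; congr (_ *m _ *m _).
by congr diag_mx; apply/rowP => i; rewrite !mxE mulrC; case: (defd i).
Qed.

(** * Diagonal lattices *)

Section Lattices.
Variable V : vectType K.
Local Notation n := (\dim {:V}).
Implicit Types (e f : n.-tuple V) (i j : 'I_n) (x y : V).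

Definition change_basis (A : 'M[K]_n) (e : n.-tuple V) : n.-tuple V :=
  [tuple vecof e (row i A) | i < n].

(* The lattice with R-basis [pi ^ (- k i) *: e`_i]. *)
Definition diag_lattice e (k : 'I_n -> int) : V -> Prop :=
  fun x => forall i, R (pi ^ k i * coord e i x).

Lemma change_basis_nth A e i : (change_basis A e)`_i = vecof e (row i A).
Proof. by rewrite -tnth_nth tnth_mktuple. Qed.

Lemma vecof_change_basis A e u : vecof (change_basis A e) u = vecof e (u *m A).
Proof.
rewrite mulmx_sum_row linear_sum; apply: eq_bigr => i _.
by rewrite linearZ change_basis_nth.
Qed.

Section ChangeOfBasis.
Variables (e : n.-tuple V) (A A' : 'M[K]_n).
Hypotheses (e_basis : basis_of fullv e) (AA' : A *m A' = 1%:M).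

Lemma change_basis_basis : basis_of fullv (change_basis A e).
Proof.
rewrite basisEfree size_tuple subvf leqnn !andbT; apply/freeP => k k0 i.
have : vecof e ((\row_j k j) *m A) = 0.
  by rewrite -vecof_change_basis -[RHS]k0; apply: eq_bigr => j _; rewrite mxE.
rewrite -(rVofK e_basis 0) linear0 => /(can_inj (vecofK e_basis)).
move/(congr1 (mulmxr A')); rewrite /= -mulmxA AA' mulmx1 mul0mx => /rowP/(_ i).
by rewrite !mxE.
Qed.

Lemma rVof_change_basis x : rVof e x = rVof (change_basis A e) x *m A.
Proof. by rewrite -{1}[x](rVofK change_basis_basis) vecof_change_basis vecofK. Qed.

End ChangeOfBasis.

Lemma diag_lattice_le e k k' : (forall i, k i <= k' i) ->
  subset_of (diag_lattice e k) (diag_lattice e k').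
Proof. by move=> le_kk' x Wx i; apply: dvr_expz_le (Wx i). Qed.

Lemma diag_lattice_scale e k (a : int) x :
  scale_set (pi ^ a) (diag_lattice e k) x <-> diag_lattice e (fun i => k i - a) x.
Proof.
split=> [[y [Wy ->]] i | Wx].
  by rewrite linearZ /= mulrA expz_pi_subK.
exists (pi ^ (- a) *: x); split.
  by move=> i; rewrite linearZ /= mulrA -expzD_pi; apply: Wx.
by rewrite scalerA -expzD_pi subrr expr0z scale1r.
Qed.

Lemma diag_lattice_R_span e k (S : V -> Prop) :
  subset_of S (diag_lattice e k) -> subset_of (R_span R S) (diag_lattice e k).
Proof.
move=> SW x [p [r [y [RSy ->]]]] i; rewrite linear_sum mulr_sumr.
apply: dvr_sum => j _; have [Rr /SW Wy] := RSy j.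
by rewrite linearZ /= mulrCA; apply: dvrM.
Qed.

Lemma diag_lattice0E e x : diag_lattice e (fun=> 0) x <-> Rmx (rVof e x).
Proof.
split=> [W0x i j | Rx i]; first by rewrite mxE; have := W0x j; rewrite expr0z mul1r.
by have := Rx 0 i; rewrite mxE expr0z mul1r.
Qed.

Lemma diag_lattice0_comb e x : basis_of fullv e ->
  diag_lattice e (fun=> 0) x <->
  exists c, (forall i, R (c i)) /\ x = \sum_i c i *: tnth e i.
Proof.
move=> e_basis; have combE c : \sum_i c i *: tnth e i = \sum_i c i *: e`_i.
  by apply: eq_bigr => i _; rewrite (tnth_nth 0).
split=> [W0x | [c [Rc ->]] i].
  exists (coord e ^~ x); split; last by rewrite combE; apply: coord_basis (memvf x).
  by move=> i; have := W0x i; rewrite expr0z mul1r.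
by rewrite combE coord_sum_free ?expr0z ?mul1r //; apply: basis_free e_basis.
Qed.

Lemma latticeE (S : V -> Prop) : lattice R S <->
  exists2 e : n.-tuple V, basis_of fullv e & forall x, S x <-> diag_lattice e (fun=> 0) x.
Proof.
split=> [[e [e_basis Se]] | [e e_basis Se]].
  by exists e => // x; rewrite Se (diag_lattice0_comb x e_basis).
by exists e; split=> // x; rewrite Se (diag_lattice0_comb x e_basis).
Qed.

Lemma diag_lattice_unimodular e A A' x : basis_of fullv e -> unimodular A A' ->
  diag_lattice (change_basis A e) (fun=> 0) x <-> diag_lattice e (fun=> 0) x.
Proof.
move=> e_basis [RA RA' AA']; rewrite !diag_lattice0E (rVof_change_basis e_basis AA').
split=> [Rx | Rx]; first exact: Rmx_mul.
by rewrite -[rVof _ x]mulmx1 -AA' mulmxA; apply: Rmx_mul.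
Qed.

Lemma diag_lattice_is_lattice e k : basis_of fullv e -> lattice R (diag_lattice e k).
Proof.
move=> e_basis; set A := diag_mx (\row_i pi ^ (- k i)).
have AA' : A *m diag_mx (\row_i pi ^ k i) = 1%:M.
  rewrite mulmx_diag -diag_const_mx; congr diag_mx; apply/rowP => i.
  by rewrite !mxE -expzD_pi addNr expr0z.
apply/latticeE; exists (change_basis A e) => [|x]; first exact: change_basis_basis AA'.
have coordE i : pi ^ k i * coord e i x = coord (change_basis A e) i x.
  rewrite !coord_rVof (rVof_change_basis e_basis AA') mul_mx_diag !mxE.
  by rewrite mulrCA -expzD_pi subrr expr0z mulr1.
by split=> Wx i; have := Wx i; rewrite expr0z mul1r coordE.
Qed.

Lemma scale_set_diag_lattice (S : V -> Prop) e k (a : int) y :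
  (forall x, S x <-> diag_lattice e k x) ->
  scale_set (pi ^ a) S y <-> diag_lattice e (fun i => k i - a) y.
Proof. by move=> SW; rewrite -diag_lattice_scale; split=> -[z [/SW Sz ->]]; exists z. Qed.

Lemma diag_lattice_basis_vector e k i a : basis_of fullv e ->
  diag_lattice e k (a *: e`_i) <-> R (pi ^ k i * a).
Proof.
move=> e_basis; have coord_ei j : coord e j (a *: e`_i) = a * (i == j)%:R.
  by rewrite linearZ /= coord_free //; apply: basis_free e_basis.
split=> [/(_ i) | Ra j]; first by rewrite coord_ei eqxx mulr1.
by rewrite coord_ei; case: eqVneq => [<-|_]; rewrite ?mulr1 // mulr0 mulr0; apply: dvr0.
Qed.

Section DiagonalPair.
Variables (e : n.-tuple V) (m : 'I_n -> int) (L M : V -> Prop).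
Hypotheses (e_basis : basis_of fullv e)
  (Le : forall x, L x <-> diag_lattice e (fun=> 0) x)
  (Me : forall x, M x <-> diag_lattice e m x).

Lemma m_minus_diag x :
  m_minus R pi L M x <-> diag_lattice e (fun i => (m i %/ 2)%Z) x.
Proof.
split.
  apply: diag_lattice_R_span => y [a [/(scale_set_diag_lattice _ _ Le) Ly
                                       /(scale_set_diag_lattice _ _ Me) My]] i.
  have [le_ag | lt_ga] := lerP (0 - a) (m i %/ 2)%Z; first exact: dvr_expz_le (Ly i).
  by apply: dvr_expz_le (My i); lia.
move=> Wx; exists n, (fun i => pi ^ (m i %/ 2)%Z * coord e i x).
exists (fun i => pi ^ (- (m i %/ 2)%Z) *: e`_i); split=> [i|].
  split; first exact: Wx.
  exists (- (m i %/ 2)%Z); split.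
    exists e`_i; split=> //; apply/Le; rewrite -[e`_i]scale1r.
    by apply/diag_lattice_basis_vector; rewrite // mulr1 expr0z; apply: dvr1.
  apply/(scale_set_diag_lattice _ _ Me)/diag_lattice_basis_vector => //.
  by rewrite -expzD_pi; apply: dvr_expz; lia.
rewrite {1}(coord_basis e_basis (memvf x)); apply: eq_bigr => i _.
by rewrite scalerA mulrAC -expzD_pi addrN expr0z mul1r.
Qed.

Lemma m_plus_diag x :
  m_plus pi L M x <-> diag_lattice e (fun i => m i - (m i %/ 2)%Z) x.
Proof.
split=> [Px i | Wx a].
  have [y [z [/(scale_set_diag_lattice _ _ Le) Ly
             /(scale_set_diag_lattice _ _ Me) Mz ->]]] := Px (- (m i - (m i %/ 2)%Z)).
  rewrite linearD mulrDr; apply: dvrD.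
    by apply: dvr_expz_le (Ly i); lia.
  by apply: dvr_expz_le (Mz i); lia.
pose low j := m j - (m j %/ 2)%Z <= - a.
exists (vecof e (\row_j if low j then coord e j x else 0)).
exists (vecof e (\row_j if low j then 0 else coord e j x)).
split.
- apply/(scale_set_diag_lattice _ _ Le) => j; rewrite coord_vecof // mxE.
  case: ifP => [lowj | _]; last by rewrite mulr0; apply: dvr0.
  by apply: dvr_expz_le (Wx j); move: lowj; rewrite /low; lia.
- apply/(scale_set_diag_lattice _ _ Me) => j; rewrite coord_vecof // mxE.
  case: ifPn => [_ | /negP lowj]; first by rewrite mulr0; apply: dvr0.
  by apply: dvr_expz_le (Wx j); move: lowj; rewrite /low; lia.
rewrite -linearD -{1}(rVofK e_basis x); congr vecof; apply/rowP => j.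
by rewrite !mxE; case: ifP; rewrite ?addr0 ?add0r.
Qed.

End DiagonalPair.

Lemma diag_lattice_eq e k k' x : (forall i, k i = k' i) ->
  diag_lattice e k x <-> diag_lattice e k' x.
Proof. by move=> kk'; split=> Wx i; have := Wx i; rewrite kk'. Qed.

Lemma lattice_ext (S S' : V -> Prop) : (forall x, S x <-> S' x) ->
  lattice R S -> lattice R S'.
Proof.
move=> SS' /latticeE [e e_basis Se]; apply/latticeE; exists e => // x.
by rewrite -SS' Se.
Qed.

Lemma almost_self_dual_diag B (M : V -> Prop) e (g h : 'I_n -> int) :
  basis_of fullv e -> (forall i, g i <= h i <= g i + 1) ->
  (forall x, M x <-> diag_lattice e g x) ->
  (forall x, dual R B M x <-> diag_lattice e h x) ->
  almost_self_dual R pi B M.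
Proof.
move=> e_basis gh Me M'e; split; last split.
- by apply: lattice_ext (diag_lattice_is_lattice g e_basis) => x; rewrite Me.
- move=> x; rewrite -[pi]expr1z => /(scale_set_diag_lattice _ _ M'e) Wx.
  by apply/Me; apply: diag_lattice_le Wx => i; have := gh i; lia.
- move=> x /Me Wx; apply/M'e; apply: diag_lattice_le Wx => i; have := gh i; lia.
Qed.

(** * Bilinear forms and adapted bases *)

Section BilinearForm.
Variable B : V -> V -> K.
Hypothesis B_bilinear : bilinear_form B.

Lemma formDl x y z : B (x + y) z = B x z + B y z.
Proof. by have := B_bilinear.1 1 x y z; rewrite scale1r mul1r. Qed.

Lemma form0l z : B 0 z = 0.
Proof. by apply: (@addrI _ (B 0 z)); rewrite -formDl !addr0. Qed.

Lemma formZl a x z : B (a *: x) z = a * B x z.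
Proof. by rewrite -[a *: x]addr0 B_bilinear.1 form0l addr0. Qed.

Lemma form_combl (I : Type) (r : seq I) (P : pred I) (c : I -> K) (F : I -> V) z :
  B (\sum_(i <- r | P i) c i *: F i) z = \sum_(i <- r | P i) c i * B (F i) z.
Proof.
rewrite (big_morph (B^~ z) (fun x y => formDl x y z) (form0l z)).
by apply: eq_bigr => i _; rewrite formZl.
Qed.

Lemma bilinear_form_swap : bilinear_form (fun x y => B y x).
Proof. by case: B_bilinear. Qed.

End BilinearForm.

Lemma formZr B : bilinear_form B -> forall a x z, B z (a *: x) = a * B z x.
Proof. by move/bilinear_form_swap/formZl. Qed.

Lemma form_combr B : bilinear_form B ->
  forall (I : Type) (r : seq I) (P : pred I) (c : I -> K) (F : I -> V) z,
  B z (\sum_(i <- r | P i) c i *: F i) = \sum_(i <- r | P i) c i * B z (F i).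
Proof. by move/bilinear_form_swap/form_combl. Qed.

Definition gram B (e f : n.-tuple V) : 'M[K]_n := \matrix_(i, j) B e`_i f`_j.

Lemma gram_swap B e f : gram (fun x y => B y x) f e = (gram B e f)^T.
Proof. by apply/matrixP => i j; rewrite !mxE. Qed.

Lemma gram_change_basis B A C e f : bilinear_form B ->
  gram B (change_basis A e) (change_basis C f) = A *m gram B e f *m C^T.
Proof.
move=> B_bil; apply/matrixP => i j; rewrite !mxE !change_basis_nth form_combl //.
under eq_bigr do rewrite form_combr // mulr_sumr.
rewrite exchange_big; apply: eq_bigr => l _; rewrite !mxE big_distrl.
by apply: eq_bigr => k _; rewrite !mxE mulrCA mulrC.
Qed.

Lemma gram_unitmx B e : bilinear_form B ->
  (forall x, (forall y, B x y = 0) -> x = 0) -> basis_of fullv e ->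
  gram B e e \in unitmx.
Proof.
move=> B_bil B_nondeg e_basis; rewrite -row_free_unit; apply/inj_row_free => v vG0.
have Bv0 j : B (vecof e v) e`_j = 0.
  have := congr1 (fun w : 'rV_n => w 0 j) vG0; rewrite !mxE => <-.
  by rewrite form_combl //; apply: eq_bigr => i _; rewrite mxE.
rewrite -(vecofK e_basis v) (B_nondeg (vecof e v)) ?linear0 // => y.
rewrite (coord_basis e_basis (memvf y)) form_combr // big1 // => j _.
by rewrite Bv0 mulr0.
Qed.

Section AdaptedBases.
Variables (B : V -> V -> K) (e f : n.-tuple V) (m : 'I_n -> int).
Hypotheses (B_bilinear : bilinear_form B) (e_basis : basis_of fullv e)
  (f_basis : basis_of fullv f) (ef_diag : gram B e f = diag_mx (\row_i pi ^ m i)).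

Lemma form_adapted_basis x i : B x f`_i = coord e i x * pi ^ m i.
Proof.
have Bef j : B e`_j f`_i = pi ^ m j *+ (j == i).
  by have := congr1 (fun G : 'M[K]_n => G j i) ef_diag; rewrite !mxE.
rewrite {1}(coord_basis e_basis (memvf x)) form_combl // (bigD1 i) //= big1 ?addr0.
  by rewrite Bef eqxx.
by move=> j ji; rewrite Bef (negPf ji) mulr0.
Qed.

Lemma dual_diag_lattice k x :
  dual R B (diag_lattice f k) x <-> diag_lattice e (fun i => m i - k i) x.
Proof.
split=> [x'W i | Wx y Wy].
  have : R (B x (pi ^ (- k i) *: f`_i)).
    apply/x'W/diag_lattice_basis_vector => //.
    by rewrite -expzD_pi subrr expr0z; apply: dvr1.
  by rewrite formZr // form_adapted_basis mulrCA -expzD_pi mulrC addrC.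
rewrite (coord_basis f_basis (memvf y)) form_combr //; apply: dvr_sum => i _.
have -> : coord f i y * B x f`_i =
          (pi ^ k i * coord f i y) * (pi ^ (m i - k i) * coord e i x).
  by rewrite mulrACA -expzD_pi addrC subrK form_adapted_basis mulrA mulrC.
exact: dvrM.
Qed.

End AdaptedBases.

Lemma dual_ext B (S S' : V -> Prop) x : (forall y, S y <-> S' y) ->
  dual R B S x <-> dual R B S' x.
Proof. by move=> SS'; split=> S'x y /SS'; apply: S'x. Qed.

Lemma dual_swap B (eps : K) (S : V -> Prop) x : eps = 1 \/ eps = -1 ->
  (forall x y, B x y = eps * B y x) ->
  dual R B S x <-> dual R (fun x y => B y x) S x.
Proof.
move=> eps_pm1 B_sym; have R_eps : R eps.
  by case: eps_pm1 => ->; [apply: dvr1 | apply/dvrN/dvr1].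
by split=> S'x y Sy; rewrite B_sym; apply: dvrM => //; apply: S'x.
Qed.

Lemma dual_diag_lattice_swap B eps e f m :
  eps = 1 \/ eps = -1 -> (forall x y, B x y = eps * B y x) -> bilinear_form B ->
  basis_of fullv e -> basis_of fullv f -> gram B e f = diag_mx (\row_i pi ^ m i) ->
  forall k x, dual R B (diag_lattice e k) x <-> diag_lattice f (fun i => m i - k i) x.
Proof.
move=> eps_pm1 B_sym B_bil e_basis f_basis ef_diag k x.
rewrite (dual_swap _ _ eps_pm1 B_sym); apply: dual_diag_lattice => //.
  exact: bilinear_form_swap.
by rewrite gram_swap ef_diag tr_diag_mx.
Qed.

Lemma adapted_bases B (L : V -> Prop) :
  bilinear_form B -> nondegenerate_form B -> lattice R L ->
  exists e f (m : 'I_n -> int),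
    [/\ basis_of fullv e, basis_of fullv f, gram B e f = diag_mx (\row_i pi ^ m i),
        forall x, L x <-> diag_lattice e (fun=> 0) x
      & forall x, L x <-> diag_lattice f (fun=> 0) x].
Proof.
move=> B_bil [B_nondeg _] /latticeE [b b_basis Lb].
have [P [P' [S [S' [m [[RP RP' PP'] [RS RS' SS'] Gb]]]]]] :=
  smith_normal_form_unitmx (gram_unitmx B_bil B_nondeg b_basis).
have P'P : P' *m P = 1%:M := mulmx1C PP'.
have S'S_tr : S'^T *m S^T = 1%:M by rewrite -trmx_mul SS' trmx1.
exists (change_basis P' b), (change_basis S'^T b), m; split.
- exact: change_basis_basis P'P.
- exact: change_basis_basis S'S_tr.
- by rewrite gram_change_basis // trmxK Gb !mulmxA P'P mul1mx -mulmxA SS' mulmx1.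
- by move=> x; rewrite (diag_lattice_unimodular _ b_basis (A' := P)).
- move=> x; rewrite (diag_lattice_unimodular _ b_basis (A' := S^T)) //.
  by split; try apply: Rmx_tr.
Qed.

End Lattices.
End DiscreteValuationRing.

Theorem theorem3p1p1 (K : fieldType) (V : vectType K)
  (R : K -> Prop) (pi : K) (B : V -> V -> K) (eps : K) (L : V -> Prop) :
  is_dvr_with_uniformizer R pi ->
  bilinear_form B -> nondegenerate_form B ->
  (eps = 1 \/ eps = -1) ->
  (forall x y, B x y = eps * B y x) ->
  lattice R L ->
  almost_self_dual R pi B (m_minus R pi L (dual R B L)) /\
  (forall x, dual R B (m_minus R pi L (dual R B L)) x <->
             m_plus pi L (dual R B L) x).
Proof.
move=> dvr B_bil B_nondeg eps_pm1 B_sym L_lattice.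
have [e [f [m [e_basis f_basis ef_diag Le Lf]]]] :=
  adapted_bases dvr B_bil B_nondeg L_lattice.
have dual_f := dual_diag_lattice dvr B_bil e_basis f_basis ef_diag.
have dual_e := dual_diag_lattice_swap dvr eps_pm1 B_sym B_bil e_basis f_basis ef_diag.
have L'e x : dual R B L x <-> diag_lattice R pi e m x.
  by rewrite (dual_ext _ _ _ Lf) dual_f; apply: diag_lattice_eq => i; rewrite subr0.
have L'f x : dual R B L x <-> diag_lattice R pi f m x.
  by rewrite (dual_ext _ _ _ Le) dual_e; apply: diag_lattice_eq => i; rewrite subr0.
have M'e x : dual R B (m_minus R pi L (dual R B L)) x <->
             diag_lattice R pi e (fun i => m i - (m i %/ 2)%Z) x.
  by rewrite (dual_ext _ _ _ (m_minus_diag dvr f_basis Lf L'f)) dual_f.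
split; last by move=> x; rewrite M'e (m_plus_diag dvr e_basis Le L'e).
apply: (almost_self_dual_diag dvr e_basis _ (m_minus_diag dvr e_basis Le L'e) M'e).
by move=> i; lia.
Qed.
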